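(* Let $P\subset\mathbb R^d$ be a $d$-polytope with $d\geq 3$, let $S$ be a simplex facet of $P$ in bounded position, and let $\mathcal F,\mathcal N\subseteq\operatorname{adj}(S)$ be disjoint with $\mathcal F$ nonsimple. Let $v\in V_S(\mathcal F,\mathcal N;P)$ and $Q=\operatorname{conv}(P\cup\{v\})$. Then for $0\leq k\leq d-2$, a $k$-face $G$ of $P$ is a $k$-face of $Q$ if and only if there is a facet $F$ of $P$ with $F\notin\mathcal F\cup\mathcal N\cup\{S\}$ and $G\subseteq F$.
   Context: For a facet $F$ of a $d$-polytope $P\subset\mathbb R^d$ let $H_F=\{x:\langle x,a_F\rangle=\ell_F\}$ be its affine hull, oriented so that $P\subseteq\{x:\langle x,a_F\rangle\geq \ell_F\}$; put $H_F^+=\{x:\langle x,a_F\rangle>\ell_F\}$, $H_F^-=\{x:\langle x,a_F\rangle<\ell_F\}$. Two facets are adjacent if they share a ridge ($(d-2)$-face); $\operatorname{adj}(S)$ is the set of facets adjacent to the facet $S$. A simplex facet is a facet combinatorially equivalent to a $(d-1)$-simplex. A facet $S$ is in bounded position if for every set of $d$ facets in $\operatorname{adj}(S)$ the hyperplanes $H_F$ of these facets intersect in a point of $H_S^-$. A subset $\mathcal F\subseteq\operatorname{adj}(S)$ is nonsimple if there is no pair of adjacent facets $G,G'\in\mathcal F$ having a common $(d-3)$-face with $S$. For disjoint $\mathcal F,\mathcal N\subseteq\operatorname{adj}(S)$, $V_S(\mathcal F,\mathcal N;P)$ is the set of points lying in $H_F^-$ for all $F\in\mathcal N\cup\{S\}$,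 in $H_F$ for all $F\in\mathcal F$, and in $H_F^+$ for all other facets $F$ of $P$. (The polytope $Q$ is called the pseudo-stacking of $P$ above $S$ with respect to $\mathcal F,\mathcal N$.) *)

From HB Require Import structures.
From mathcomp Require Import all_boot all_order all_algebra.
From mathcomp Require Import boolp classical_sets.
Set Implicit Arguments. Unset Strict Implicit. Unset Printing Implicit Defensive.
Import Order.TTheory GRing.Theory Num.Theory.
Local Open Scope ring_scope.
Local Open Scope classical_set_scope.

Section Polytopes.
Variables (R : realFieldType) (d : nat).
Local Notation pt := 'rV[R]_d.

Definition dotv (x a : pt) : R := \sum_(i < d) x ord0 i * a ord0 i.

Definition conv (V : seq pt) : set pt :=
  [set x | exists l : 'I_(size V) -> R,
     (forall i, 0 <= l i) /\ \sum_i l i = 1 /\ x = \sum_i l i *: V`_i].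

Definition aff_indep (W : seq pt) : bool :=
  \rank (\matrix_(i < (size W).-1) (W`_i.+1 - W`_0)) == (size W).-1.

Definition affdim (A : set pt) (k : nat) : Prop :=
  (exists W : seq pt, size W = k.+1 /\ (forall x, x \in W -> A x) /\ aff_indep W) /\
  (forall W : seq pt, size W = k.+2 -> (forall x, x \in W -> A x) -> ~~ aff_indep W).

(* faces of P: intersections of P with valid inequalities (incl. P and the empty set) *)
Definition isface (P G : set pt) : Prop :=
  exists (a : pt) (b : R), (forall x, P x -> b <= dotv x a) /\
    G = P `&` [set x | dotv x a = b].

Definition kface (P : set pt) (k : nat) (G : set pt) : Prop :=
  isface P G /\ affdim G k.

Definition polytope_dim (P : set pt) (n : nat) : Prop := affdim P n.

Definition facet (P F : set pt) : Prop := kface P d.-1 F.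

Definition adjacent (P F F' : set pt) : Prop :=
  facet P F /\ facet P F' /\ F <> F' /\
  exists Rg, kface P (d - 2) Rg /\ Rg `<=` F /\ Rg `<=` F'.

Definition adj (P S : set pt) : set (set pt) := [set F | adjacent P S F].

Definition simplex_facet (P S : set pt) : Prop :=
  facet P S /\ exists W : seq pt, size W = d /\ aff_indep W /\ S = conv W.

(* (a, l) defines the oriented hyperplane H_F of the facet F:
   F = P ∩ {<x,a> = l} and P ⊆ {<x,a> >= l} *)
Definition supp (P F : set pt) (a : pt) (l : R) : Prop :=
  a != 0 /\ (forall x, P x -> l <= dotv x a) /\ F = P `&` [set x | dotv x a = l].

Definition Hplane (P F : set pt) (x : pt) : Prop :=
  exists a l, supp P F a l /\ dotv x a = l.
Definition Hplus (P F : set pt) (x : pt) : Prop :=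
  exists a l, supp P F a l /\ l < dotv x a.
Definition Hminus (P F : set pt) (x : pt) : Prop :=
  exists a l, supp P F a l /\ dotv x a < l.

Definition bounded_position (P S : set pt) : Prop :=
  forall Fs : 'I_d -> set pt, injective Fs -> (forall i, adj P S (Fs i)) ->
    exists x, (forall i, Hplane P (Fs i) x) /\ Hminus P S x /\
      (forall y, (forall i, Hplane P (Fs i) y) -> y = x).

Definition nonsimple (P S : set pt) (FF : set (set pt)) : Prop :=
  ~ exists G G', FF G /\ FF G' /\ adjacent P G G' /\
      exists K, kface P (d - 3) K /\ K `<=` G /\ K `<=` G' /\ K `<=` S.

Definition VS (P S : set pt) (FF NN : set (set pt)) : set pt :=
  [set x | Hminus P S x /\ (forall F, NN F -> Hminus P F x) /\
           (forall F, FF F -> Hplane P F x) /\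
           (forall F, facet P F -> ~ FF F -> ~ NN F -> F <> S -> Hplus P F x)].

End Polytopes.

From HB Require Import structures.
From mathcomp Require Import all_boot all_order all_algebra.
From mathcomp Require Import boolp classical_sets.
From mathcomp Require Import zify lra.
Import Order.TTheory GRing.Theory Num.Theory.
Local Open Scope ring_scope.
Local Open Scope classical_set_scope.
Set Implicit Arguments. Unset Strict Implicit. Unset Printing Implicit Defensive.

(* Beneath-beyond: a nonempty face [G] of [P = conv V] survives in
   [Q = conv (v :: V)], for [v] outside [P], exactly when some facet of [P]
   containing [G] has [v] strictly on the side of [P].  Given such a facet, a
   supporting hyperplane of [G] tilted towards that facet's hyperplane supports
   [G] in [Q].  Conversely, a supporting hyperplane of [G] in [Q] has [v]
   strictly on the side of [P]; rotating it, one new affinely independent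
   vertex at a time, while keeping [G] on it and [v] strictly beneath it, ends
   at a facet hyperplane of [P].  As the oriented hyperplane of a facet is
   unique up to a positive factor, for [v] in [V_S(F, N; P)] the facets with [v]
   strictly beneath are exactly those outside [F], [N] and [{S}]. *)

Section Polytope.
Variables (R : realFieldType) (d : nat).
Local Notation pt := 'rV[R]_d.
Implicit Types (V W : seq pt) (x y p v a c z : pt).

Lemma dotvE x a : dotv x a = (x *m a^T) 0 0.
Proof. by rewrite !mxE; apply: eq_bigr => i _; rewrite mxE. Qed.

Lemma dotvC x a : dotv x a = dotv a x.
Proof. by apply: eq_bigr => i _; rewrite mulrC. Qed.

Lemma dotvDl x y a : dotv (x + y) a = dotv x a + dotv y a.
Proof. by rewrite !dotvE mulmxDl mxE. Qed.

Lemma dotvZl t x a : dotv (t *: x) a = t * dotv x a.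
Proof. by rewrite !dotvE -scalemxAl mxE. Qed.

Lemma dotvNl x a : dotv (- x) a = - dotv x a.
Proof. by rewrite -scaleN1r dotvZl mulN1r. Qed.

Lemma dotvBl x y a : dotv (x - y) a = dotv x a - dotv y a.
Proof. by rewrite dotvDl dotvNl. Qed.

Lemma dotv_suml (I : finType) (f : I -> pt) a :
  dotv (\sum_i f i) a = \sum_i dotv (f i) a.
Proof. by rewrite dotvE mulmx_suml summxE; apply: eq_bigr => i _; rewrite dotvE. Qed.

Lemma dotvDr x a c : dotv x (a + c) = dotv x a + dotv x c.
Proof. by rewrite !(dotvC x) dotvDl. Qed.

Lemma dotvZr t x a : dotv x (t *: a) = t * dotv x a.
Proof. by rewrite !(dotvC x) dotvZl. Qed.

Lemma dotvNr x a : dotv x (- a) = - dotv x a.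
Proof. by rewrite !(dotvC x) dotvNl. Qed.

Lemma dotv0r x : dotv x 0 = 0.
Proof. by rewrite dotvE trmx0 mulmx0 mxE. Qed.

Lemma conv_mem V p : p \in V -> conv V p.
Proof.
rewrite -index_mem => ip; pose i0 := Ordinal ip.
exists (fun i => (i == i0)%:R); split=> [i|]; first by rewrite ler0n.
rewrite (bigD1 i0) //= eqxx big1 ?addr0 => [|i /negbTE ->//].
split=> //; rewrite (bigD1 i0) //= eqxx scale1r nth_index -?index_mem //.
by rewrite big1 ?addr0 // => i /negbTE ->; rewrite scale0r.
Qed.

Lemma conv_dotv V (l : 'I_(size V) -> R) a :
  dotv (\sum_i l i *: V`_i) a = \sum_i l i * dotv V`_i a.
Proof. by rewrite dotv_suml; apply: eq_bigr => i _; rewrite dotvZl. Qed.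

Lemma conv_ge V a b x :
  (forall p, p \in V -> b <= dotv p a) -> conv V x -> b <= dotv x a.
Proof.
move=> Vb [l [l0 [l1 ->]]]; rewrite conv_dotv -[b]mul1r -l1 mulr_suml.
by apply: ler_sum => i _; rewrite ler_wpM2l ?Vb ?mem_nth.
Qed.

Lemma conv_eq V a b x :
  (forall p, p \in V -> dotv p a = b) -> conv V x -> dotv x a = b.
Proof.
move=> Vb [l [l0 [l1 ->]]]; rewrite conv_dotv -[b]mul1r -l1 mulr_suml.
by apply: eq_bigr => i _; rewrite Vb ?mem_nth.
Qed.

Lemma conv_weight_tight V a b (l : 'I_(size V) -> R) :
  (forall p, p \in V -> b <= dotv p a) -> (forall i, 0 <= l i) -> \sum_i l i = 1 ->
  dotv (\sum_i l i *: V`_i) a = b -> forall i, l i != 0 -> dotv V`_i a = b.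
Proof.
move=> Vb l0 l1 xb i li.
have gap0 : \sum_i l i * (dotv V`_i a - b) = 0.
  under eq_bigr => j _ do rewrite mulrBr.
  by rewrite sumrB -conv_dotv -mulr_suml l1 mul1r xb subrr.
have gap_ge0 j : 0 <= l j * (dotv V`_j a - b).
  by rewrite mulr_ge0 // subr_ge0 Vb ?mem_nth.
move/eqP: (psumr_eq0P (fun j _ => gap_ge0 j) gap0 (i := i) isT).
by rewrite mulf_eq0 (negbTE li) subr_eq0 => /eqP.
Qed.

Lemma conv_tight_vertex V a b x :
  (forall p, p \in V -> b <= dotv p a) -> conv V x -> dotv x a = b ->
  exists2 p, p \in V & dotv p a = b.
Proof.
move=> Vb [l [l0 [l1 xE]]]; rewrite xE => xb.
have [i li] : exists i, l i != 0.
  apply: contrapT => /forallNP l_eq0; move: l1; rewrite big1 => [/eqP|i _].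
    by rewrite eq_sym oner_eq0.
  exact/eqP/negPn/negP/l_eq0.
by exists V`_i; [rewrite mem_nth | apply: conv_weight_tight xb i li].
Qed.

Lemma conv_face_sub V c b a l x :
  (forall p, p \in V -> b <= dotv p c) ->
  (forall p, p \in V -> dotv p c = b -> dotv p a = l) ->
  conv V x -> dotv x c = b -> dotv x a = l.
Proof.
move=> Vb Vl [m [m0 [m1 ->]]] xb; rewrite conv_dotv -[l]mul1r -m1 mulr_suml.
apply: eq_bigr => i _; have [->|mi] := eqVneq (m i) 0; first by rewrite !mul0r.
by rewrite Vl ?mem_nth // (conv_weight_tight Vb m0 m1 xb mi).
Qed.

Lemma conv_cons_sub V v x : conv V x -> conv (v :: V) x.
Proof.
move=> [l [l0 [l1 ->]]].
exists (fun i : 'I_(size V).+1 => oapp l 0 (unlift ord0 i)); split.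
  by move=> i; case: (unlift ord0 i) => /=.
rewrite !big_ord_recl unlift_none /= add0r scale0r add0r.
by split; [rewrite -l1 | ]; apply: eq_bigr => i _; rewrite liftK.
Qed.

Lemma conv_cons_tight V v a b x :
  (forall p, p \in V -> b <= dotv p a) -> b < dotv v a ->
  conv (v :: V) x -> dotv x a = b -> conv V x.
Proof.
move=> Vb vb [l [l0 [l1 xE]]] xb.
have Vvb p : p \in v :: V -> b <= dotv p a.
  by rewrite in_cons => /orP [/eqP -> | /Vb //]; apply: ltW.
have lv : l ord0 = 0.
  apply/eqP/negPn/negP => /(conv_weight_tight Vvb l0 l1).
  by rewrite -xE => /(_ xb) /= vE; move: vb; rewrite vE ltxx.
exists (fun i => l (lift ord0 i)); move: l1 xE.
by rewrite !big_ord_recl lv add0r scale0r add0r.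
Qed.

Lemma orthP n (M : 'M[R]_(n, d)) z :
  reflect (forall i, dotv (row i M) z = 0) (M <= kermx z^T)%MS.
Proof.
apply: (iffP sub_kermxP) => [Mz i | Mz].
  by rewrite dotvE -row_mul Mz row0 mxE.
apply/row_matrixP => i; rewrite row_mul row0.
by apply/rowP => j; rewrite ord1 -dotvE Mz mxE.
Qed.

Lemma orth_sym n (M : 'M[R]_(n, d)) z :
  (M <= kermx z^T)%MS = (z <= kermx M^T)%MS.
Proof.
by rewrite !sub_kermx -[z *m _]trmxK trmx_mul trmxK trmx_eq0.
Qed.

Lemma orth_rank n (M : 'M[R]_(n, d)) z :
  z != 0 -> (M <= kermx z^T)%MS -> (\rank M < d)%N.
Proof.
move=> z0 /mxrankS; rewrite mxrank_ker mxrank_tr rank_rV z0.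
by have := rank_leq_col z; rewrite rank_rV z0; lia.
Qed.

Lemma orth_exists n (M : 'M[R]_(n, d)) :
  (\rank M < d)%N -> exists2 z : pt, z != 0 & (M <= kermx z^T)%MS.
Proof.
move=> Md; have /rowV0Pn [z zK z0] : kermx M^T != 0.
  by rewrite -mxrank_eq0 mxrank_ker mxrank_tr; lia.
by exists z; rewrite // orth_sym.
Qed.

Lemma orth_proportional n (M : 'M[R]_(n, d)) a a' :
  \rank M = d.-1 -> a != 0 -> (M <= kermx a^T)%MS -> (M <= kermx a'^T)%MS ->
  exists s, a' = s *: a.
Proof.
rewrite !orth_sym => rM a0 aK a'K.
have /andP [_ Ka] : (a == kermx M^T)%MS.
  rewrite -(mxrank_leqif_eq aK).2 rank_rV a0 mxrank_ker mxrank_tr rM.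
  by have := rank_leq_col a; rewrite rank_rV a0; lia.
have /submxP [D ->] := submx_trans a'K Ka.
by exists (D 0 0); rewrite {1}[D]mx11_scalar mul_scalar_mx.
Qed.

Definition diffmx W : 'M[R]_((size W).-1, d) :=
  \matrix_(i < (size W).-1) (W`_i.+1 - W`_0).

Lemma diffmx_orth W z zl :
  (forall w, w \in W -> dotv w z = zl) -> (diffmx W <= kermx z^T)%MS.
Proof.
move=> Wz; apply/orthP => i; have iW : (i.+1 < size W)%N by rewrite -ltn_predRL.
by rewrite rowK dotvBl !Wz ?subrr ?mem_nth // (ltn_trans (ltn0Sn i) iW).
Qed.

Lemma aff_indep_hyperplane W a l :
  a != 0 -> (forall w, w \in W -> dotv w a = l) -> aff_indep W -> ((size W).-1 < d)%N.
Proof. by move=> a0 /diffmx_orth Wa /eqP <-; apply: orth_rank a0 Wa. Qed.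

Lemma aff_indep1 p : aff_indep [:: p].
Proof. by rewrite /aff_indep /= -leqn0 rank_leq_row. Qed.

Lemma aff_indep_rcons W p z zl :
  aff_indep W -> ~~ aff_indep (rcons W p) ->
  (forall w, w \in W -> dotv w z = zl) -> dotv p z = zl.
Proof.
case: W => [_|w0 W]; first by rewrite aff_indep1.
rewrite /aff_indep size_rcons /=.
set M2 := \matrix_(i < (size W).+1) ((rcons W p)`_i - w0).
have -> : \matrix_(i < size W) (W`_i - w0) = \matrix_i ((rcons W p)`_i - w0).
  by apply/row_matrixP => i; rewrite !rowK nth_rcons ltn_ord.
set M1 := \matrix_(i < size W) _ => /eqP rM1 rM2 Wz.
have M12 : (M1 <= M2)%MS.
  apply/row_subP => i; rewrite rowK.
  by have := row_sub (widen_ord (leqnSn _) i) M2; rewrite rowK.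
have M21 : (M2 <= M1)%MS.
  rewrite -(mxrank_leqif_sup M12).2 eqn_leq mxrankS //= rM1.
  by rewrite -ltnS ltn_neqAle rM2 rank_leq_row.
have /orthP/(_ ord_max) : (M2 <= kermx z^T)%MS.
  apply: submx_trans M21 _; apply/orthP => i.
  by rewrite rowK nth_rcons ltn_ord dotvBl !Wz ?subrr ?mem_head // in_cons mem_nth ?orbT.
rewrite /M2 rowK nth_rcons ltnn eqxx dotvBl (Wz w0) ?mem_head // => /eqP.
by rewrite subr_eq0 => /eqP.
Qed.

Lemma full_offplane V a l :
  polytope_dim (conv V) d -> a != 0 -> exists2 p, p \in V & dotv p a != l.
Proof.
move=> [[W [sW [WV Wind]]] _] a0; apply: contrapT => off.
have Vl p : p \in V -> dotv p a = l.
  by move=> pV; apply/eqP/negPn/negP => pl; apply: off; exists p.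
have := aff_indep_hyperplane a0 (fun w wW => conv_eq Vl (WV w wW)) Wind.
by rewrite sW ltnn.
Qed.

(* Rotate the hyperplane [<x, a> = l] about its intersection with
   [<x, z> = zl] until it hits a further vertex. *)
Lemma rotate_support V a l z zl :
  (forall p, p \in V -> l <= dotv p a) -> (exists2 p, p \in V & dotv p z < zl) ->
  exists t, exists2 p, p \in V &
    [/\ 0 <= t, dotv p z < zl, dotv p (a + t *: z) = l + t * zl &
        forall q, q \in V -> l + t * zl <= dotv q (a + t *: z)].
Proof.
move=> Vl [_ /(nthP 0) [i0 i0V <-] i0z].
pose below i := dotv V`_i z < zl.
pose ratio (i : 'I_(size V)) := (dotv V`_i a - l) / (zl - dotv V`_i z).
case: (@arg_minP _ _ _ (Ordinal i0V) below ratio i0z) => i ibelow imin.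
set t := ratio i in imin.
have gap_gt0 : 0 < zl - dotv V`_i z by rewrite subr_gt0.
have t_ge0 : 0 <= t by rewrite divr_ge0 ?subr_ge0 ?Vl ?mem_nth ?ltW.
have tE : t * (zl - dotv V`_i z) = dotv V`_i a - l by rewrite divfK ?gt_eqF.
have dE x : dotv x (a + t *: z) = dotv x a + t * dotv x z by rewrite dotvDr dotvZr.
exists t, V`_i; rewrite ?mem_nth //; split => //; first by rewrite dE; lra.
move=> _ /(nthP 0) [j jV <-]; rewrite dE; have := Vl _ (mem_nth 0 jV).
have [jz|zj] := ltP (dotv V`_j z) zl.
  move: (imin (Ordinal jV) jz); rewrite ler_pdivlMr ?subr_gt0 //; lra.
have : t * zl <= t * dotv V`_j z by rewrite ler_wpM2l.
lra.
Qed.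

Section BeneathFacet.
Variables (V : seq pt) (v c : pt) (b : R).
Hypothesis V_full : polytope_dim (conv V) d.

Definition pivot_state a l W :=
  [/\ forall p, p \in V -> l <= dotv p a,
      forall p, p \in V -> dotv p c = b -> dotv p a = l,
      l < dotv v a, aff_indep W & forall w, w \in W -> w \in V /\ dotv w a = l].

Lemma rotation_axis W : (size W < d)%N -> aff_indep W ->
  exists z, [/\ forall w, w \in W -> dotv w z = dotv v z,
               forall p, ~~ aff_indep (rcons W p) -> dotv p z = dotv v z &
               exists2 p, p \in V & dotv p z < dotv v z].
Proof.
move=> Wd Wind; set M := \matrix_(i < size W) (W`_i - v).
have [z z0 /orthP MZ] := orth_exists (leq_ltn_trans (rank_leq_row M) Wd).
have Wz w : w \in W -> dotv w z = dotv v z.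
  move=> /(nthP 0) [i iW <-]; have := MZ (Ordinal iW).
  by rewrite rowK dotvBl => /eqP; rewrite subr_eq0 => /eqP.
have [p pV] := full_offplane (dotv v z) V_full z0.
rewrite neq_lt => /orP [pz | zp].
  by exists z; split=> // [q qW|]; [exact: aff_indep_rcons Wind qW Wz | exists p].
exists (- z); split => [w wW | q qW | ]; rewrite ?dotvNr.
- by rewrite Wz.
- by rewrite (aff_indep_rcons Wind qW Wz).
- by exists p; rewrite // !dotvNr ltrN2.
Qed.

(* If no tight vertex extends [W], the tight vertices lie in the affine span
   of [W]; rotating about the span of [W] and [v] keeps them tight, keeps [v]
   strictly beneath, and reaches a new vertex off that span. *)
Lemma pivot_step a l W : (size W < d)%N -> pivot_state a l W ->
  exists a' l' p, pivot_state a' l' (rcons W p).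
Proof.
move=> Wd [Va Vca va Wind WV].
have [[p [pV pa pind]]|no_ext] :=
  pselect (exists p, [/\ p \in V, dotv p a = l & aff_indep (rcons W p)]).
  exists a, l, p; split => // w.
  by rewrite mem_rcons in_cons => /orP [/eqP ->|/WV].
have [z [Wz tight_z [p0 p0V p0z]]] := rotation_axis Wd Wind.
have Vz p : p \in V -> dotv p a = l -> dotv p z = dotv v z.
  move=> pV pa; apply: tight_z; apply/negP => pind; apply: no_ext; by exists p.
have [t [p pV [t0 pz pt Vt]]] := rotate_support Va (ex_intro2 _ _ p0 p0V p0z).
have dE x : dotv x (a + t *: z) = dotv x a + t * dotv x z by rewrite dotvDr dotvZr.
exists (a + t *: z), (l + t * dotv v z), p; split => //.
- by move=> q qV qc; rewrite dE Vca // Vz // Vca.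
- by rewrite dE; lra.
- apply: contraT => pind; have pv := aff_indep_rcons Wind pind Wz.
  by move: pz; rewrite pv ltxx.
- move=> w; rewrite mem_rcons in_cons => /orP [/eqP -> //|wW].
  by have [wV wa] := WV w wW; rewrite dE wa Wz.
Qed.

Lemma pivot_loop p0 : p0 \in V -> dotv p0 c = b ->
  (forall p, p \in V -> b <= dotv p c) -> b < dotv v c ->
  forall n, (n < d)%N -> exists a l W, size W = n.+1 /\ pivot_state a l W.
Proof.
move=> p0V p0c Vc vc; elim=> [_|n IH nd].
  exists c, b, [:: p0]; split=> //; split=> //; first exact: aff_indep1.
  by move=> w; rewrite mem_seq1 => /eqP ->.
have [a [l [W [sW st]]]] := IH (ltnW nd).
have Wd : (size W < d)%N by rewrite sW.
have [a' [l' [p st']]] := pivot_step Wd st.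
by exists a', l', (rcons W p); rewrite size_rcons sW.
Qed.

Lemma beneath_facet p0 : (0 < d)%N -> p0 \in V -> dotv p0 c = b ->
  (forall p, p \in V -> b <= dotv p c) -> b < dotv v c ->
  exists a l, [/\ facet (conv V) (conv V `&` [set x | dotv x a = l]),
    supp (conv V) (conv V `&` [set x | dotv x a = l]) a l, l < dotv v a &
    forall p, p \in V -> dotv p c = b -> dotv p a = l].
Proof.
move=> d0 p0V p0c Vc vc.
have dd : (d.-1 < d)%N by rewrite ltn_predL.
have [a [l [W [sW [Va Vca va Wind WV]]]]] := pivot_loop p0V p0c Vc vc dd.
have a0 : a != 0.
  by apply/eqP => a0; move: va; rewrite -(Vca p0 p0V p0c) a0 !dotv0r ltxx.
exists a, l; split => //; last by split => //; split => // x; apply: conv_ge.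
split; first by exists a, l; split => // x; apply: conv_ge.
split.
  exists W; split => //; split => // w /WV [wV wa].
  by split => //; apply: conv_mem.
move=> W' sW' W'F; apply/negP => /(aff_indep_hyperplane a0 (fun w wW => (W'F w wW).2)).
by rewrite sW' /= prednK // ltnn.
Qed.

End BeneathFacet.

Section Facets.
Variables (V : seq pt).
Hypothesis V_full : polytope_dim (conv V) d.

Lemma supp_unique F a l a' l' : facet (conv V) F ->
  supp (conv V) F a l -> supp (conv V) F a' l' ->
  exists2 s, 0 < s & a' = s *: a /\ l' = s * l.
Proof.
move=> [_ [[W [sW [WF Wind]]] _]] [a0 [Va FE]] [a'0 [Va' FE']].
have Wl w : w \in W -> dotv w a = l by move/WF; rewrite FE => -[].
have Wl' w : w \in W -> dotv w a' = l' by move/WF; rewrite FE' => -[].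
have rW : \rank (diffmx W) = d.-1 by move/eqP: Wind ->; rewrite sW.
have [s a'E] := orth_proportional rW a0 (diffmx_orth Wl) (diffmx_orth Wl').
have l'E : l' = s * l.
  by rewrite -(Wl' W`_0) ?a'E ?dotvZr ?Wl // mem_nth // sW.
exists s => //; rewrite lt_def; apply/andP; split.
  by apply: contra_neq a'0 => s0; rewrite a'E s0 scale0r.
have [p pV pa] := full_offplane l V_full a0.
have lp : 0 < dotv p a - l by rewrite subr_gt0 lt_def pa Va //; apply: conv_mem.
have := Va' p (conv_mem pV); rewrite a'E l'E dotvZr -subr_ge0 -mulrBr.
by rewrite pmulr_lge0.
Qed.

Lemma Hplus_facet F x : facet (conv V) F ->
  Hplus (conv V) F x -> ~ Hplane (conv V) F x /\ ~ Hminus (conv V) F x.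
Proof.
move=> Ff [a [l [Fal xa]]].
split=> -[a' [l' [Fal' xa']]]; have [s s0 [a'E l'E]] := supp_unique Ff Fal Fal';
  move: xa'; rewrite a'E l'E dotvZr.
  by move/(mulfI (lt0r_neq0 s0)) => xl; move: xa; rewrite xl ltxx.
by rewrite ltr_pM2l // => xl; move: xa; rewrite ltNge ltW.
Qed.

Lemma VS_Hplus S FF NN v F : VS (conv V) S FF NN v -> facet (conv V) F ->
  Hplus (conv V) F v <-> ~ FF F /\ ~ NN F /\ F <> S.
Proof.
move=> [vS [vNN [vFF vF]]] Ff; split=> [vbF|[nFF [nNN nS]]]; last exact: vF.
have [nplane nminus] := Hplus_facet Ff vbF.
by split=> [/vFF //|]; split=> [/vNN //|FS]; apply: nminus; rewrite FS.
Qed.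

End Facets.

Lemma Hminus_notin (P F : set pt) x : Hminus P F x -> ~ P x.
Proof. by move=> [a [l [[_ [Pa _]] xa]]] /Pa; rewrite leNgt xa. Qed.

(* Tilting a supporting hyperplane of [G] towards that of [F] until it
   separates [v] from [G]. *)
Lemma isface_conv_cons V v G F a l :
  isface (conv V) G -> supp (conv V) F a l -> l < dotv v a -> G `<=` F ->
  isface (conv (v :: V)) G.
Proof.
move=> [c [b [Vcb GE]]] [_ [Va FE]] va GF.
pose t := (`|b - dotv v c| + 1) / (dotv v a - l).
have tE : t * (dotv v a - l) = `|b - dotv v c| + 1 by rewrite divfK // subr_eq0 gt_eqF.
have t0 : 0 <= t by apply: divr_ge0; [exact: addr_ge0 | rewrite subr_ge0 ltW].
have bv := ler_norm (b - dotv v c).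
have dE x : dotv x (c + t *: a) = dotv x c + t * dotv x a by rewrite dotvDr dotvZr.
have Vta x : conv V x -> t * l <= t * dotv x a by move=> Vx; rewrite ler_wpM2l ?Va.
have Vt x : conv V x -> b + t * l <= dotv x (c + t *: a).
  by move=> Vx; have := Vcb x Vx; have := Vta x Vx; rewrite dE; lra.
have vt : b + t * l < dotv v (c + t *: a) by rewrite dE; move: tE; rewrite mulrBr; lra.
exists (c + t *: a), (b + t * l); split.
  move=> x; apply: conv_ge => p; rewrite in_cons => /orP [/eqP ->|/conv_mem/Vt //].
  exact: ltW.
apply/seteqP; split=> x.
  move=> Gx; have := GF x Gx; rewrite FE => -[_ xa].
  move: Gx; rewrite GE => -[Vx xc].
  by split; [exact: conv_cons_sub | rewrite /= dE xc xa].
move=> [Qx xt]; have Vx := conv_cons_tight (fun p pV => Vt p (conv_mem pV)) vt Qx xt.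
rewrite GE; split => //=; have := Vcb x Vx; have := Vta x Vx.
by move: xt; rewrite /= dE; lra.
Qed.

Lemma beneath_facet_of_isface V v G : (0 < d)%N -> polytope_dim (conv V) d ->
  ~ conv V v -> G `<=` conv V -> G !=set0 -> isface (conv (v :: V)) G ->
  exists F, facet (conv V) F /\ Hplus (conv V) F v /\ G `<=` F.
Proof.
move=> d0 V_full vV GV [x Gx] [c [b [Qcb GE]]].
have Vcb p : p \in V -> b <= dotv p c.
  by move=> pV; apply: Qcb; apply: conv_mem; rewrite in_cons pV orbT.
have Gc y : G y -> dotv y c = b by rewrite GE => -[].
have vc : b < dotv v c.
  have vQ : conv (v :: V) v by apply: conv_mem; rewrite mem_head.
  rewrite lt_def Qcb // andbT; apply/eqP => vb; apply: vV.
  by apply: GV; rewrite GE.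
have [p0 p0V p0c] := conv_tight_vertex Vcb (GV x Gx) (Gc x Gx).
have [a [l [Ff Fs va Vca]]] := beneath_facet V_full d0 p0V p0c Vcb vc.
exists (conv V `&` [set x | dotv x a = l]); split=> //; split; first by exists a, l.
by move=> y Gy; split; [exact: GV | exact: conv_face_sub Vcb Vca (GV y Gy) (Gc y Gy)].
Qed.

Lemma isface_conv_consP V v G : (0 < d)%N -> polytope_dim (conv V) d ->
  ~ conv V v -> isface (conv V) G -> G !=set0 ->
  isface (conv (v :: V)) G <-> exists F, facet (conv V) F /\ Hplus (conv V) F v /\ G `<=` F.
Proof.
move=> d0 V_full vV PG G0; split.
  by apply: beneath_facet_of_isface => //; case: PG => [c [b [_ ->]]] x [].
by move=> [F [_ [[a [l [Fs va]]] GF]]]; apply: isface_conv_cons PG Fs va GF.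
Qed.

End Polytope.

Theorem theorem2p11 (R : realFieldType) (d : nat) (V : seq 'rV[R]_d)
    (S : set 'rV[R]_d) (FF NN : set (set 'rV[R]_d)) (v : 'rV[R]_d) :
  (3 <= d)%N ->
  polytope_dim (conv V) d ->
  simplex_facet (conv V) S ->
  bounded_position (conv V) S ->
  FF `<=` adj (conv V) S -> NN `<=` adj (conv V) S -> FF `&` NN = set0 ->
  nonsimple (conv V) S FF ->
  VS (conv V) S FF NN v ->
  forall (k : nat) (G : set 'rV[R]_d), (k <= d - 2)%N -> kface (conv V) k G ->
    (kface (conv (v :: V)) k G <->
     exists F, facet (conv V) F /\ ~ FF F /\ ~ NN F /\ F <> S /\ G `<=` F).
Proof.
move=> d3 V_full _ _ _ _ _ _ vVS k G _ [PG Gk].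
have d0 : (0 < d)%N by apply: leq_trans d3.
have G0 : G !=set0.
  by case: Gk => -[W [sW [WG _]]] _; exists W`_0; apply: WG; rewrite mem_nth // sW.
have beneathP := isface_conv_consP d0 V_full (Hminus_notin vVS.1) PG G0.
split=> [[/beneathP [F [Ff [vF GF]]] _]|[F [Ff [nFF [nNN [nS GF]]]]]].
  by exists F; have [? [? ?]] := (VS_Hplus V_full vVS Ff).1 vF.
split=> //; apply/beneathP; exists F; split=> //; split=> //.
exact/(VS_Hplus V_full vVS Ff).2.
Qed.
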